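(* Let $\langle A,\Omega,\mu,u_S,u_R\rangle$ be a normal form cheap talk game with $|\Omega|=n$. For any value $v$ such that some cheap talk equilibrium yields expected receiver's utility $v$, there exists a cheap talk equilibrium $(\pi,s)$ with $|\mathrm{supp}(\pi)|\le n+1$ whose expected receiver's utility is $v$.
   Context: A normal form cheap talk game $\langle A,\Omega,\mu,u_S,u_R\rangle$ consists of a finite action set $A$, a finite state set $\Omega$ of size $n$, a prior $\mu\in\Delta(\Omega)$, and utilities $u_S,u_R:\Omega\times A\to\mathbb{R}$. The sender observes $\omega\sim\mu$ and sends a signal from a discrete set $\Sigma$ ($|\Sigma|\ge n+1$) via $\pi:\Omega\to\Delta(\Sigma)$; the receiver acts via $s:\Sigma\to\Delta(A)$. $\mathrm{supp}(\pi)$ is the set of signals sent with positive probability; for $\sigma\in\mathrm{supp}(\pi)$, $p_\sigma$ is the Bayesian posterior. $(\pi,s)$ is a cheap talk equilibrium if (i) for every $\omega$, each signal sent with positive probability in $\omega$ maximizes $\mathbb{E}_{a\sim s[\sigma]}u_S(\omega,a)$ over $\sigma\in\mathrm{supp}(\pi)$; (ii) for every $\sigma\in\mathrm{supp}(\pi)$, $s[\sigma]$ is supported on maximizers of $\sum_\omega p_\sigma(\omega)u_R(\omega,a)$. Expected receiver's utility is $\mathbb{E}_{\omega\sim\mu,\sigma\sim\pi[\omega],a\sim s[\sigma]}u_R(\omega,a)$. *)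

From mathcomp Require Import all_boot all_order all_algebra.
Set Implicit Arguments. Unset Strict Implicit. Unset Printing Implicit Defensive.
Import Order.TTheory GRing.Theory Num.Theory.
Local Open Scope ring_scope.

Section CheapTalk.
Variables (R : realFieldType) (A Omega Sigma : finType).

Definition is_distr (T : finType) (f : T -> R) : Prop :=
  (forall x, 0 <= f x) /\ \sum_(x : T) f x = 1.

Variables (mu : Omega -> R) (uS uR : Omega -> A -> R).

Definition sig_prob (pi : Omega -> Sigma -> R) (sg : Sigma) : R :=
  \sum_(w : Omega) mu w * pi w sg.

Definition supp (pi : Omega -> Sigma -> R) : {set Sigma} :=
  [set sg | 0 < sig_prob pi sg].

Definition posterior (pi : Omega -> Sigma -> R) (sg : Sigma) (w : Omega) : R :=
  mu w * pi w sg / sig_prob pi sg.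

Definition sender_util (s : Sigma -> A -> R) (w : Omega) (sg : Sigma) : R :=
  \sum_(a : A) s sg a * uS w a.

Definition receiver_post_util (pi : Omega -> Sigma -> R) (sg : Sigma) (a : A) : R :=
  \sum_(w : Omega) posterior pi sg w * uR w a.

Definition cheap_talk_eq (pi : Omega -> Sigma -> R) (s : Sigma -> A -> R) : Prop :=
  [/\ (forall w, is_distr (pi w)),
      (forall sg, is_distr (s sg)),
      (forall w sg, 0 < pi w sg ->
         sg \in supp pi /\
         forall sg', sg' \in supp pi -> sender_util s w sg' <= sender_util s w sg)
    &
      (forall sg, sg \in supp pi -> forall a, 0 < s sg a ->
         forall a', receiver_post_util pi sg a' <= receiver_post_util pi sg a)].

Definition receiver_util (pi : Omega -> Sigma -> R) (s : Sigma -> A -> R) : R :=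
  \sum_(w : Omega) \sum_(sg : Sigma) \sum_(a : A) mu w * pi w sg * s sg a * uR w a.

End CheapTalk.

From mathcomp Require Import all_boot all_order all_algebra.
Import Order.TTheory GRing.Theory Num.Theory.
Local Open Scope ring_scope.
Set Implicit Arguments. Unset Strict Implicit. Unset Printing Implicit Defensive.

(* Each signal sg contributes to the prior through its posterior p_sg and to
   the receiver's payoff through its value, so an equilibrium is described by
   the nonnegative combination of the vectors (p_sg, value_sg) of R^(n+1) with
   weights Pr(sg).  By Caratheodory's theorem for cones the same point is a
   nonnegative combination of at most n+1 of these vectors, using only signals
   already in the support.  Sending each of those signals with its new weight,
   while keeping the posteriors, preserves receiver optimality (posteriors are
   unchanged) and sender optimality (the support only shrinks); states of prior
   probability zero are sent to a sender-optimal surviving signal. *)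

Lemma nontrivial_null_combination (R : fieldType) (I J : finType)
    (S : {set I}) (x : I -> J -> R) :
  (#|J| < #|S|)%N ->
  exists c : I -> R, [/\ exists i, c i != 0, (forall i, i \notin S -> c i = 0)
                     & forall j, \sum_i c i * x i j = 0].
Proof.
move=> ltJS.
pose M : 'M[R]_(#|S|, #|J|) := \matrix_(a, b) x (enum_val a) (enum_val b).
have kerM_neq0 : kermx M != 0.
  rewrite kermx_eq0 /row_free; apply: contraTneq ltJS => <-.
  by rewrite -leqNgt rank_leq_col.
have [i0 rowK_neq0] : exists i0, row i0 (kermx M) != 0.
  apply/existsP; apply: contraNT kerM_neq0; rewrite negb_exists => /forallP rows0.
  by apply/eqP/row_matrixP => i; rewrite row0; apply/eqP/negPn.
have [a0 ca0_neq0] : exists a0, row i0 (kermx M) 0 a0 != 0.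
  apply/existsP; apply: contraNT rowK_neq0; rewrite negb_exists => /forallP c0.
  by apply/eqP/rowP => a; rewrite [RHS]mxE; apply/eqP/negPn.
have cM0 : row i0 (kermx M) *m M = 0 by rewrite -row_mul mulmx_ker row0.
set c0 := row i0 (kermx M) in ca0_neq0 cM0.
exists (fun i => \sum_(a < #|S| | enum_val a == i) c0 0 a); split.
- exists (enum_val a0); rewrite (big_pred1 a0) // => a /=.
  by apply/eqP/eqP => [/enum_val_inj|->].
- move=> i iNS; rewrite big_pred0 // => a; apply: contraNF iNS => /eqP <-.
  exact: enum_valP.
- move=> j; transitivity ((c0 *m M) 0 (enum_rank j)); last by rewrite cM0 mxE.
  rewrite mxE; under eq_bigr do rewrite mulr_suml big_mkcond.
  rewrite exchange_big /=; apply: eq_bigr => a _.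
  rewrite -big_mkcond /= (big_pred1 (enum_val a)) ?mxE ?enum_rankK //.
Qed.

Lemma conic_caratheodory (R : realFieldType) (I J : finType)
    (x : I -> J -> R) (lam : I -> R) :
  (forall i, 0 <= lam i) ->
  exists lam' : I -> R,
    [/\ forall i, 0 <= lam' i, forall i, lam' i != 0 -> lam i != 0,
        (#|[set i | lam' i != 0%R]| <= #|J|)%N
      & forall j, \sum_i lam' i * x i j = \sum_i lam i * x i j].
Proof.
have [k] := ubnP #|[set i | lam i != 0]|.
elim: k lam => // k IH lam suppS lam_ge0.
have [le_supp|gt_supp] := leqP #|[set i | lam i != 0]| #|J|.
  by exists lam; split.
set S := [set i | lam i != 0] in suppS gt_supp.
have [c [[i1 ci1_neq0] cS c_null]] := nontrivial_null_combination x gt_supp.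
have [d [[i2 di2_gt0] dS d_null]] : exists d : I -> R, [/\ exists i, 0 < d i,
    forall i, i \notin S -> d i = 0 & forall j, \sum_i d i * x i j = 0].
  have [ci1_lt0|ci1_gt0] := ltrP (c i1) 0; last first.
    by exists c; split=> //; exists i1; rewrite lt_def ci1_neq0.
  exists (fun i => - c i); split.
  - by exists i1; rewrite oppr_gt0.
  - by move=> i /cS ->; rewrite oppr0.
  - by move=> j; under eq_bigr do rewrite mulNr; rewrite sumrN c_null oppr0.
(* Move from lam along -d until a first coordinate vanishes. *)
have [i0 di0_gt0 t_min] := @arg_minP _ _ _ i2 (fun i => 0 < d i)
  (fun i => lam i / d i) di2_gt0.
set t := lam i0 / d i0 in t_min.
pose lam1 i := lam i - t * d i.
have lam1_ge0 i : 0 <= lam1 i.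
  rewrite subr_ge0; have [di_gt0|di_le0] := ltrP 0 (d i).
    by rewrite -ler_pdivlMr // t_min.
  by rewrite (le_trans _ (lam_ge0 i)) // mulr_ge0_le0 // divr_ge0 // ltW.
have lam1_supp i : lam1 i != 0 -> lam i != 0.
  apply: contraNN => /eqP lami0; have iNS : i \notin S by rewrite inE lami0 eqxx.
  by rewrite /lam1 lami0 dS // mulr0 subr0.
have lam1_i0 : lam1 i0 = 0 by rewrite /lam1 /t divfK ?subrr // gt_eqF.
have supp_lt : (#|[set i | lam1 i != 0%R]| < k)%N.
  apply: (@leq_trans #|S|) => //; apply/proper_card/properP; split.
    by apply/subsetP => i; rewrite !inE; apply: lam1_supp.
  exists i0; last by rewrite inE lam1_i0 eqxx.
  by apply: contraLR di0_gt0 => /dS ->; rewrite ltxx.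
have [lam' [lam'_ge0 lam'_supp lam'_card lam'_comb]] := IH lam1 supp_lt lam1_ge0.
exists lam'; split=> // [i /lam'_supp /lam1_supp //|j].
rewrite lam'_comb; under eq_bigr do rewrite mulrBl -mulrA.
by rewrite sumrB -mulr_sumr d_null mulr0 subr0.
Qed.

Section Signals.
Variables (R : realFieldType) (A Omega Sigma : finType).
Variables (mu : Omega -> R) (uS uR : Omega -> A -> R).
Hypothesis mu_ge0 : forall w, 0 <= mu w.

Definition signal_value (pi : Omega -> Sigma -> R) (s : Sigma -> A -> R)
    (sg : Sigma) : R :=
  \sum_w posterior mu pi sg w * \sum_a s sg a * uR w a.

Section SenderStrategy.
Variable pi : Omega -> Sigma -> R.
Hypothesis pi_ge0 : forall w sg, 0 <= pi w sg.

Lemma sig_prob_ge0 sg : 0 <= sig_prob mu pi sg.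
Proof. by apply: sumr_ge0 => w _; rewrite mulr_ge0. Qed.

Lemma posterior_ge0 sg w : 0 <= posterior mu pi sg w.
Proof. by rewrite divr_ge0 ?mulr_ge0 ?sig_prob_ge0. Qed.

Lemma sig_prob_mul_posterior sg w :
  sig_prob mu pi sg * posterior mu pi sg w = mu w * pi w sg.
Proof.
have [sp0|sp_neq0] := eqVneq (sig_prob mu pi sg) 0; last first.
  by rewrite mulrC divfK.
rewrite sp0 mul0r; move/psumr_eq0P: sp0 => -> // w' _.
by rewrite mulr_ge0.
Qed.

Lemma sum_posterior sg :
  sig_prob mu pi sg != 0 -> \sum_w posterior mu pi sg w = 1.
Proof. by move=> sp_neq0; rewrite -mulr_suml divff. Qed.

Lemma receiver_util_by_signal s :
  receiver_util mu uR pi s = \sum_sg sig_prob mu pi sg * signal_value pi s sg.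
Proof.
rewrite /receiver_util exchange_big; apply: eq_bigr => sg _.
rewrite mulr_sumr; apply: eq_bigr => w _.
rewrite mulrA sig_prob_mul_posterior mulr_sumr.
by apply: eq_bigr => a _; rewrite !mulrA.
Qed.

End SenderStrategy.

Section Reweighting.
Variables (pi : Omega -> Sigma -> R) (s : Sigma -> A -> R).
Hypothesis pi_s_eq : cheap_talk_eq mu uS uR pi s.
Variable lam : Sigma -> R.
Hypothesis lam_ge0 : forall sg, 0 <= lam sg.
Hypothesis lam_supp : forall sg, lam sg != 0 -> sg \in supp mu pi.
Hypothesis lam_posterior : forall w, \sum_sg lam sg * posterior mu pi sg w = mu w.

Let pi_ge0 w sg : 0 <= pi w sg.
Proof. by case: pi_s_eq => pi_distr _ _ _; case: (pi_distr w). Qed.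

Lemma exists_weight_gt0 : \sum_w mu w = 1 -> exists sg, 0 < lam sg.
Proof.
move=> mu_sum1; apply/existsP; apply: contraT.
rewrite negb_exists => /forallP lam_le0.
have lam0 sg : lam sg = 0 by apply/eqP; rewrite eq_le lam_ge0 andbT leNgt lam_le0.
have mu0 w : mu w = 0.
  by rewrite -lam_posterior big1 // => sg _; rewrite lam0 mul0r.
by move: mu_sum1; rewrite big1 // => /eqP; rewrite eq_sym oner_eq0.
Qed.

Variable sg0 : Sigma.
Hypothesis lam_sg0 : 0 < lam sg0.

Definition best_signal (w : Omega) : Sigma :=
  [arg max_(sg > sg0 | 0 < lam sg) sender_util uS s w sg]%O.

Lemma best_signalP w : 0 < lam (best_signal w) /\
  forall sg, 0 < lam sg ->
    sender_util uS s w sg <= sender_util uS s w (best_signal w).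
Proof. by rewrite /best_signal; case: arg_maxP => // sg ? max_sg; split. Qed.

(* In a state of prior probability zero the sender's choice does not affect any
   posterior, so any sender-optimal surviving signal will do. *)
Definition reweight (w : Omega) (sg : Sigma) : R :=
  if mu w == 0 then (sg == best_signal w)%:R
  else lam sg * posterior mu pi sg w / mu w.

Lemma mu_mul_reweight w sg : mu w * reweight w sg = lam sg * posterior mu pi sg w.
Proof.
rewrite /reweight; have [mu0|mu_neq0] := eqVneq (mu w) 0.
  by rewrite mu0 mul0r /posterior mu0 !mul0r mulr0.
by rewrite mulrC divfK.
Qed.

Lemma reweight_ge0 w sg : 0 <= reweight w sg.
Proof.
rewrite /reweight; case: eqP => _; first exact: ler0n.
exact: divr_ge0 (mulr_ge0 (lam_ge0 sg) (posterior_ge0 pi_ge0 sg w)) (mu_ge0 w).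
Qed.

Lemma sig_prob_reweight sg : sig_prob mu reweight sg = lam sg.
Proof.
rewrite /sig_prob; under eq_bigr do rewrite mu_mul_reweight.
rewrite -mulr_sumr; have [->|lam_neq0] := eqVneq (lam sg) 0.
  by rewrite mul0r.
have sp_gt0 : 0 < sig_prob mu pi sg by have := lam_supp lam_neq0; rewrite inE.
by rewrite sum_posterior ?mulr1 ?gt_eqF.
Qed.

Lemma supp_reweight sg : (sg \in supp mu reweight) = (0 < lam sg).
Proof. by rewrite inE sig_prob_reweight. Qed.

Lemma posterior_reweight sg w :
  lam sg != 0 -> posterior mu reweight sg w = posterior mu pi sg w.
Proof.
move=> lam_neq0.
by rewrite {1}/posterior sig_prob_reweight mu_mul_reweight mulrC mulKf.
Qed.

Lemma reweight_distr w : is_distr (reweight w).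
Proof.
split=> [sg|]; first exact: reweight_ge0.
rewrite /reweight; have [_|mu_neq0] := eqVneq (mu w) 0; last first.
  by rewrite -mulr_suml lam_posterior divff.
by rewrite (bigD1 (best_signal w)) //= eqxx big1 ?addr0 // => sg /negPf ->.
Qed.

Lemma reweight_sender_opt w sg : 0 < reweight w sg ->
  sg \in supp mu reweight /\ forall sg', sg' \in supp mu reweight ->
    sender_util uS s w sg' <= sender_util uS s w sg.
Proof.
rewrite /reweight; have [_|mu_neq0] := eqVneq (mu w) 0.
  have [-> _|] := eqVneq sg (best_signal w); last by rewrite ltxx.
  have [best_gt0 best_max] := best_signalP w.
  by split=> [|sg']; rewrite supp_reweight // => /best_max.
move=> weight_gt0.
have lam_gt0 : 0 < lam sg.
  rewrite lt_def lam_ge0 andbT; apply: contraTneq weight_gt0 => ->.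
  by rewrite !mul0r ltxx.
have pi_gt0 : 0 < pi w sg.
  rewrite lt_def pi_ge0 andbT; apply: contraTneq weight_gt0 => pi0.
  by rewrite /posterior pi0 !(mulr0, mul0r) ltxx.
case: pi_s_eq => _ _ sender_opt _; have [_ sg_max] := sender_opt w sg pi_gt0.
split=> [|sg']; rewrite supp_reweight // => /gt_eqF/negbT/lam_supp; exact: sg_max.
Qed.

Lemma reweight_eq : cheap_talk_eq mu uS uR reweight s.
Proof.
case: pi_s_eq => _ s_distr _ receiver_opt; split=> //.
- exact: reweight_distr.
- exact: reweight_sender_opt.
move=> sg; rewrite supp_reweight => /gt_eqF/negbT lam_neq0 a sa_gt0 a'.
rewrite /receiver_post_util; under eq_bigr do rewrite posterior_reweight //.
under [X in _ <= X]eq_bigr do rewrite posterior_reweight //.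
exact: receiver_opt (lam_supp lam_neq0) a sa_gt0 a'.
Qed.

Lemma receiver_util_reweight :
  receiver_util mu uR reweight s = \sum_sg lam sg * signal_value pi s sg.
Proof.
rewrite receiver_util_by_signal; last exact: reweight_ge0.
apply: eq_bigr => sg _; rewrite sig_prob_reweight.
have [->|lam_neq0] := eqVneq (lam sg) 0; first by rewrite !mul0r.
by congr (_ * _); apply: eq_bigr => w _; rewrite posterior_reweight.
Qed.

End Reweighting.
End Signals.

Theorem mainTheorem9 (R : realFieldType) (A Omega Sigma : finType)
  (mu : Omega -> R) (uS uR : Omega -> A -> R)
  (hmu : is_distr mu) (hSigma : (#|Omega|.+1 <= #|Sigma|)%N) (v : R) :
  (exists (pi : Omega -> Sigma -> R) (s : Sigma -> A -> R),
      cheap_talk_eq mu uS uR pi s /\ receiver_util mu uR pi s = v) ->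
  exists (pi : Omega -> Sigma -> R) (s : Sigma -> A -> R),
    [/\ cheap_talk_eq mu uS uR pi s,
        (#|supp mu pi| <= #|Omega|.+1)%N
      & receiver_util mu uR pi s = v].
Proof.
case=> pi [s [pi_s_eq util_v]]; have [mu_ge0 mu_sum1] := hmu.
have [pi_distr _ _ _] := pi_s_eq.
have pi_ge0 w sg : 0 <= pi w sg by case: (pi_distr w).
pose x sg (j : option Omega) :=
  if j is Some w then posterior mu pi sg w else signal_value mu uR pi s sg.
have [lam [lam_ge0 lam_supp lam_card lam_comb]] :=
  conic_caratheodory x (sig_prob_ge0 mu_ge0 pi_ge0).
have lam_posterior w : \sum_sg lam sg * posterior mu pi sg w = mu w.
  rewrite (lam_comb (Some w)); under eq_bigr do rewrite sig_prob_mul_posterior //.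
  by rewrite -mulr_sumr (proj2 (pi_distr w)) mulr1.
have lam_in_supp sg : lam sg != 0 -> sg \in supp mu pi.
  by move/lam_supp => sp_neq0; rewrite inE lt_def sp_neq0 sig_prob_ge0.
have [sg0 lam_sg0] := exists_weight_gt0 lam_ge0 lam_posterior mu_sum1.
exists (reweight mu uS pi s lam sg0), s; split.
- exact: reweight_eq.
- rewrite card_option in lam_card; apply: leq_trans lam_card.
  apply/subset_leq_card/subsetP.
  by move=> sg; rewrite supp_reweight // inE => /gt_eqF/negbT.
- rewrite receiver_util_reweight // (lam_comb None) -util_v.
  by rewrite receiver_util_by_signal.
Qed.
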